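(* Let $\ell\ge 1$ be an integer and let $D_{2m}=\langle u,v : u^m=e=v^2,\ vu=u^{m-1}v\rangle$ denote the dihedral group of order $2m$. Let $(a_1,\dots,a_{2\ell})$ be a graceful permutation of length $2\ell$ with sequence of absolute differences $(b_1,\dots,b_{2\ell-1})$, and let $(c_1,\dots,c_{2\ell+1})$ be a graceful permutation of length $2\ell+1$ with sequence of absolute differences $(d_1,\dots,d_{2\ell})$. Then: 1. if $a_{2\ell}=\ell$, then $D_{8\ell+2}$ has a sequencing with first element $u^{b_1}$; 2. if $a_1=\ell$ and $a_{2\ell}=\ell-1$, then $D_{8\ell+2}$ has a sequencing with first element $u^{b_1}$ and a sequencing with first element $u^{b_{2\ell-1}}$; 3. if $c_1=\ell$ and $c_{2\ell+1}=\ell-1$, then $D_{8\ell+6}$ has a sequencing with first element $u^{d_1}$ and a sequencing with first element $u^{d_{2\ell}}$.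
   Context: A graceful permutation of length $n$ is an arrangement $(a_1,\dots,a_n)$ of the integers $\{0,1,\dots,n-1\}$ such that its sequence of absolute differences $(|a_2-a_1|,|a_3-a_2|,\dots,|a_n-a_{n-1}|)$ consists of the integers $\{1,\dots,n-1\}$. A sequencing of a finite group $G$ with identity $e$ is an ordering $(g_1,\dots,g_{|G|-1})$ of the elements of $G\setminus\{e\}$ such that the partial products $e, g_1, g_1g_2,\dots,g_1\cdots g_{|G|-1}$ are pairwise distinct. *)

From mathcomp Require Import all_boot all_order all_algebra.
Set Implicit Arguments. Unset Strict Implicit. Unset Printing Implicit Defensive.
Import GRing.Theory.

Definition absdiff (x y : nat) : nat := (x - y) + (y - x).

Definition absdiffs (a : seq nat) : seq nat :=
  [seq absdiff (nth 0 a i.+1) (nth 0 a i) | i <- iota 0 (size a).-1].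

Definition graceful (n : nat) (a : seq nat) : bool :=
  perm_eq a (iota 0 n) && perm_eq (absdiffs a) (iota 1 n.-1).

(* Dihedral group D_{2m} of order 2m, m >= 2, realized as Z_m x| Z_2:
   the pair (i, s) stands for u^i v^s (u of order m, v^2 = e, vu = u^{m-1}v). *)
Definition dihedral (m : nat) := ('Z_m * bool)%type.

Definition dmul (m : nat) (x y : dihedral m) : dihedral m :=
  ((if x.2 then x.1 - y.1 else x.1 + y.1)%R, x.2 (+) y.2).

Definition dunit (m : nat) : dihedral m := (0%R, false).

Definition du (m k : nat) : dihedral m := (k%:R%R, false).

Definition is_sequencing (T : finType) (mul : T -> T -> T) (e : T) (g : seq T) : bool :=
  perm_eq g (enum [pred x : T | x != e]) && uniq (e :: scanl mul e g).

Definition has_sequencing_from (T : finType) (mul : T -> T -> T) (e x : T) : Prop :=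
  exists g : seq T, is_sequencing mul e (x :: g).

(* A sequencing of a finite group G amounts to a directed terrace: a listing h_0, ..., h_{|G|-1}
   of G whose quotients h_t^{-1} h_{t+1} are pairwise distinct.  These quotients are then exactly
   the nonidentity elements, and in this order they form a sequencing with first element
   h_0^{-1} h_1, whose partial products are the h_0^{-1} h_t.
   For D_{2m} with m = 2n + 1 the terrace is assembled from a graceful permutation a of length n,
   written once on rotations u^{a_i} and once, reversed, on reflections u^{k - a_i} v.  The
   quotients inside these two blocks are u^{a_{i+1} - a_i} and u^{a_i - a_{i+1}}, so each
   rotation u^{+-d}, 0 < d < n, occurs exactly once.  An explicit block alternating between the
   remaining rotations and reflections supplies u^{+-n} and all reflections as quotients.  The
   automorphism u |-> u^{-1} fixes the sign of the first element.  The other sequencings come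
   from the same construction applied to the complement n - 1 - a_i or to the reversal of the
   graceful permutation; for m = 4l + 3 the middle block depends on a_0, hence two variants. *)

From mathcomp Require Import all_boot all_order all_algebra zify ring.
Set Implicit Arguments. Unset Strict Implicit. Unset Printing Implicit Defensive.

(** * Sequencings from directed terraces *)

Lemma pairmap_iota (T U : Type) (f : T -> T -> U) (h : nat -> T) k n :
  pairmap f (h k) [seq h t | t <- iota k.+1 n] = [seq f (h t) (h t.+1) | t <- iota k n].
Proof. by elim: n k => [|n IHn] k //=; rewrite IHn. Qed.

Lemma inj_below_wlog_le (T : Type) (f : nat -> T) N :
  (forall t t', t <= t' -> t' < N -> f t = f t' -> t = t') ->
  forall t t', t < N -> t' < N -> f t = f t' -> t = t'.
Proof.
move=> inj_le t t' lt_t lt_t' eq_f; case: (leqP t t') => [le | /ltnW le].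
  exact: inj_le.
exact/esym/inj_le.
Qed.

Section Sequencings.
Variables (T : finType) (mul : T -> T -> T) (e : T) (inv : T -> T).
Hypothesis mulA : associative mul.
Hypothesis mul1 : left_id e mul.
Hypothesis mulV : forall x, mul (inv x) x = e.

Let quot x y := mul (inv x) y.

Lemma mulxV x : mul x (inv x) = e.
Proof.
have Vx := mulV (inv x).
by rewrite -[mul x _]mul1 -{1}Vx -mulA [mul (inv x) _]mulA mulV mul1 Vx.
Qed.

Lemma mulx1 x : mul x e = x.
Proof. by rewrite -(mulV x) mulA mulxV mul1. Qed.

Lemma mulx_inj x : injective (mul x).
Proof. by move=> y z E; rewrite -(mul1 y) -(mul1 z) -(mulV x) -!mulA E. Qed.

Lemma mul_quot x y : mul x (quot x y) = y.
Proof. by rewrite /quot mulA mulxV mul1. Qed.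

Lemma quot_quot x y z : quot (quot x y) (quot x z) = quot y z.
Proof.
apply: (@mulx_inj (quot x y)).
by rewrite mul_quot /quot mulA -(mulA (inv x)) mulxV mulx1.
Qed.

Lemma quot_eq1 x y : (quot x y == e) = (x == y).
Proof.
apply/eqP/eqP => [E | ->]; last exact: mulV.
by rewrite -(mul_quot x y) E mulx1.
Qed.

Lemma perm_nonunit (g : seq T) : uniq g -> e \notin g -> size g = #|T|.-1 ->
  perm_eq g (enum [pred x | x != e]).
Proof.
move=> uniq_g g_e size_g; apply: uniq_perm => //; first exact: enum_uniq.
have sub_g : {subset g <= enum [pred x | x != e]}.
  by move=> x gx; rewrite mem_enum inE; apply: contraNneq g_e => <-.
have [] // := uniq_min_size uniq_g sub_g.
by rewrite -cardE cardC1 size_g.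
Qed.

Lemma is_sequencingP (g : seq T) :
  reflect [/\ uniq g, e \notin g, size g = #|T|.-1 & uniq (e :: scanl mul e g)]
          (is_sequencing mul e g).
Proof.
apply: (iffP andP) => [[perm_g uniq_prods] | [uniq_g g_e size_g uniq_prods]].
  split=> //; first by rewrite (perm_uniq perm_g) enum_uniq.
    by rewrite (perm_mem perm_g) mem_enum inE eqxx.
  by rewrite (perm_size perm_g) -cardE cardC1.
by rewrite perm_nonunit.
Qed.

Lemma has_sequencing_from_morph (f : T -> T) x :
  injective f -> {morph f : y z / mul y z} -> f e = e ->
  has_sequencing_from mul e x -> has_sequencing_from mul e (f x).
Proof.
move=> inj_f fM f1 [g /is_sequencingP [uniq_g g_e size_g uniq_prods]].
have scanl_f y s : scanl mul (f y) (map f s) = map f (scanl mul y s).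
  by elim: s y => //= z s IHs y; rewrite -fM IHs.
exists (map f g); apply/is_sequencingP; split.
- by rewrite -map_cons map_inj_uniq.
- by rewrite -map_cons -f1 mem_map.
- by rewrite -map_cons size_map.
- by rewrite -map_cons -{1 2}f1 scanl_f -map_cons map_inj_uniq.
Qed.

Lemma has_sequencing_from_terrace (h : nat -> T) : 1 < #|T| ->
  (forall t t', t < #|T| -> t' < #|T| -> h t = h t' -> t = t') ->
  (forall t t', t < #|T|.-1 -> t' < #|T|.-1 ->
     quot (h t) (h t.+1) = quot (h t') (h t'.+1) -> t = t') ->
  has_sequencing_from mul e (quot (h 0) (h 1)).
Proof.
move=> T_gt1 inj_h inj_quots; set N := #|T|.-1.
have N_gt0 : 0 < N by rewrite /N; lia.
pose h0 t := quot (h 0) (h t).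
(* The sequencing consists of the quotients of h0, whose partial products are h0 1, h0 2, ... *)
have quots_h0 : pairmap quot e [seq h0 t | t <- iota 1 N]
                = [seq quot (h t) (h t.+1) | t <- iota 0 N].
  rewrite -(mulV (h 0)) -/(h0 0) pairmap_iota.
  by apply: eq_map => t; rewrite quot_quot.
exists [seq quot (h t) (h t.+1) | t <- iota 1 N.-1].
rewrite (_ : _ :: _ = [seq quot (h t) (h t.+1) | t <- iota 0 N]); last first.
  by rewrite -(prednK N_gt0).
apply/is_sequencingP; split.
- rewrite map_inj_in_uniq ?iota_uniq // => t t'.
  by rewrite !mem_iota => /andP [_ lt_t] /andP [_ lt_t']; apply: inj_quots.
- apply/mapP => -[t]; rewrite mem_iota => /andP [_ lt_t] /esym /eqP.
  by rewrite quot_eq1 => /eqP /inj_h; lia.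
- by rewrite size_map size_iota.
rewrite -quots_h0 (pairmapK mul_quot) -(mulV (h 0)) -/(h0 0) -map_cons.
rewrite -[0 :: _]/(iota 0 N.+1) map_inj_in_uniq ?iota_uniq // => t t'.
rewrite !mem_iota => /andP [_ lt_t] /andP [_ lt_t'] /mulx_inj; apply: inj_h; lia.
Qed.

End Sequencings.

(** * Dihedral groups *)

Definition subm (m x y : nat) : nat := if y <= x then x - y else x + m - y.

Lemma subm_lt m x y : x < m -> y < m -> subm m x y < m.
Proof. by rewrite /subm; case: ifP; lia. Qed.

Lemma subm_eq m n x y x' y' : 2 * n <= m.+1 -> x < n -> y < n -> x' < n -> y' < n ->
  subm m x y = subm m x' y' -> x + y' = x' + y.
Proof. by rewrite /subm; do 2 case: ifP; lia. Qed.

Lemma subm_range m n x y : n <= m -> x < n -> y < n -> x != y ->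
  0 < subm m x y < n \/ m - n < subm m x y < m.
Proof. by rewrite /subm; case: ifP; lia. Qed.

Lemma subm_compl m c x y : x <= c -> y <= c -> subm m (c - x) (c - y) = subm m y x.
Proof. by rewrite /subm; do 2 case: ifP; lia. Qed.

(* A pair (i, s) with i < m codes u^i v^s in D_{2m}; [quot_code m p q] codes the quotient
   p^{-1} q, so that the combinatorics of the terraces below is plain arithmetic on nat. *)
Definition quot_code (m : nat) (p q : nat * bool) : nat * bool :=
  (if p.2 then subm m p.1 q.1 else subm m q.1 p.1, p.2 (+) q.2).

Import GRing.Theory.

Section Dihedral.
Variable m : nat.
Hypothesis m_gt1 : 1 < m.
Local Open Scope ring_scope.

Definition dinv (x : dihedral m) : dihedral m := if x.2 then x else (- x.1, false).

Definition dflip (x : dihedral m) : dihedral m := (- x.1, x.2).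

Definition dcode (p : nat * bool) : dihedral m := (p.1%:R, p.2).

Lemma dmulA : associative (@dmul m).
Proof.
case=> x s [y t] [z u]; rewrite /dmul; congr pair; last exact: addbA.
by case: s; case: t => /=; ring.
Qed.

Lemma dmul1 : left_id (dunit m) (@dmul m).
Proof. by case=> x s; rewrite /dmul /= add0r. Qed.

Lemma dmulV x : dmul (dinv x) x = dunit m.
Proof. by case: x => x [] /=; rewrite /dmul /dunit /= ?subrr ?addNr. Qed.

Lemma card_dihedral : #|{: dihedral m}| = (2 * m)%N.
Proof. by rewrite card_prod card_bool card_ord Zp_cast // mulnC. Qed.

Lemma dflipK : involutive dflip.
Proof. by case=> x s; rewrite /dflip opprK. Qed.

Lemma dflipM : {morph dflip : x y / dmul x y}.
Proof. by case=> x s [y t]; rewrite /dmul /dflip /=; congr pair; case: s; ring. Qed.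

Lemma dflip1 : dflip (dunit m) = dunit m.
Proof. by rewrite /dflip /dunit /= oppr0. Qed.

Lemma natr_Zp_inj (x y : nat) : (x < m)%N -> (y < m)%N -> (x%:R : 'Z_m) = y%:R -> x = y.
Proof. by move=> lt_x lt_y /(congr1 val) /=; rewrite !val_Zp_nat // !modn_small. Qed.

Lemma dcode_inj p q : (p.1 < m)%N -> (q.1 < m)%N -> dcode p = dcode q -> p = q.
Proof. by case: p q => [x s] [y t] /= lt_x lt_y [/natr_Zp_inj -> // ->]. Qed.

Lemma subm_natr x y : (x < m)%N -> (y < m)%N -> ((subm m x y)%:R : 'Z_m) = x%:R - y%:R.
Proof.
move=> lt_x lt_y; rewrite /subm; case: leqP => [le_yx | lt_xy]; first by rewrite natrB.
by rewrite natrB ?natrD ?pchar_Zp ?addr0 //; lia.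
Qed.

Lemma dquot_code p q : (p.1 < m)%N -> (q.1 < m)%N ->
  dmul (dinv (dcode p)) (dcode q) = dcode (quot_code m p q).
Proof.
case: p q => [x []] [y t] lt_x lt_y; rewrite /dmul /dcode /quot_code /= subm_natr //.
by rewrite addrC.
Qed.

Lemma du_absdiff x y : (x < m)%N -> (y < m)%N ->
  du m (absdiff y x) = (if (x <= y)%N then id else dflip) (dcode (subm m y x, false)).
Proof.
move=> lt_x lt_y; rewrite /du /dcode /dflip /absdiff subm_natr //=.
by case: leqP => [le | lt] /=; rewrite ?opprB -natrB; try lia; congr (_%:R, _); lia.
Qed.

Lemma dihedral_sequencing (h : nat -> nat * bool) :
  (forall t, (t < 2 * m)%N -> ((h t).1 < m)%N) ->
  (forall t t', (t < 2 * m)%N -> (t' < 2 * m)%N -> h t = h t' -> t = t') ->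
  (forall t t', (t < (2 * m).-1)%N -> (t' < (2 * m).-1)%N ->
     quot_code m (h t) (h t.+1) = quot_code m (h t') (h t'.+1) -> t = t') ->
  (h 0%N).2 = false -> (h 1%N).2 = false ->
  has_sequencing_from (@dmul m) (dunit m) (du m (absdiff (h 1%N).1 (h 0%N).1)).
Proof.
move=> lt_h inj_h inj_quots h0_rot h1_rot.
have lt_h0 : ((h 0%N).1 < m)%N by apply: lt_h; lia.
have lt_h1 : ((h 1%N).1 < m)%N by apply: lt_h; lia.
have : has_sequencing_from (@dmul m) (dunit m) (dcode (quot_code m (h 0%N) (h 1%N))).
  rewrite -dquot_code //.
  apply: (has_sequencing_from_terrace dmulA dmul1 dmulV (h := dcode \o h));
    rewrite card_dihedral /=; first by lia.
  - move=> t t' lt_t lt_t' E; apply: inj_h => //.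
    by apply: dcode_inj E; apply: lt_h.
  - move=> t t' lt_t lt_t'; rewrite !dquot_code ?lt_h //; try lia.
    move=> E; apply: inj_quots => //; apply: dcode_inj E;
      rewrite /quot_code; case: ifP => _; apply: subm_lt; apply: lt_h; lia.
rewrite /quot_code h0_rot h1_rot du_absdiff //=; case: ifP => // _.
exact: (has_sequencing_from_morph (inv_inj dflipK) dflipM dflip1).
Qed.

End Dihedral.

(** * Graceful permutations *)

Lemma absdiffC x y : absdiff x y = absdiff y x.
Proof. by rewrite /absdiff addnC. Qed.

Lemma size_absdiffs (a : seq nat) : size (absdiffs a) = (size a).-1.
Proof. by rewrite size_map size_iota. Qed.

Lemma nth_absdiffs (a : seq nat) i : i < (size a).-1 ->
  nth 0 (absdiffs a) i = absdiff (nth 0 a i.+1) (nth 0 a i).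
Proof. by move=> lt_i; rewrite (nth_map 0) ?size_iota // nth_iota. Qed.

Lemma absdiffs_rev (a : seq nat) : absdiffs (rev a) = rev (absdiffs a).
Proof.
apply: (@eq_from_nth _ 0); first by rewrite size_rev !size_absdiffs size_rev.
rewrite size_absdiffs size_rev => i lt_i.
rewrite nth_rev size_absdiffs // nth_absdiffs ?size_rev // nth_absdiffs; last by lia.
by rewrite !nth_rev; try lia; rewrite absdiffC; congr absdiff; congr nth; lia.
Qed.

Lemma nth_absdiffs_rev (a : seq nat) : 1 < size a ->
  nth 0 (absdiffs (rev a)) 0 = nth 0 (absdiffs a) (size a).-2.
Proof. by move=> a_gt1; rewrite absdiffs_rev nth_rev size_absdiffs ?subn1; lia. Qed.

Lemma absdiffs_compl n (a : seq nat) : all (gtn n) a ->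
  absdiffs [seq n.-1 - x | x <- a] = absdiffs a.
Proof.
move=> /allP lt_a.
have lt_nth j : j < size a -> nth 0 a j < n by move=> lt_j; apply/lt_a/mem_nth.
apply: (@eq_from_nth _ 0); first by rewrite !size_absdiffs size_map.
rewrite size_absdiffs size_map => i lt_i.
rewrite !nth_absdiffs ?size_map // !(nth_map 0); try lia.
by move: (lt_nth i) (lt_nth i.+1); rewrite /absdiff; lia.
Qed.

Section Graceful.
Variables (n : nat) (a : seq nat).
Hypothesis grace_a : graceful n a.

Lemma graceful_size : size a = n.
Proof. by case/andP: grace_a => /perm_size ->; rewrite size_iota. Qed.

Lemma graceful_lt i : i < n -> nth 0 a i < n.
Proof.
case/andP: grace_a => perm_a _ lt_i.
have : nth 0 a i \in iota 0 n by rewrite -(perm_mem perm_a) mem_nth ?graceful_size.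
by rewrite mem_iota.
Qed.

Lemma graceful_all_lt : all (gtn n) a.
Proof.
by case/andP: grace_a => perm_a _; apply/allP => x; rewrite (perm_mem perm_a) mem_iota.
Qed.

Lemma graceful_nth_inj i j : i < n -> j < n -> nth 0 a i = nth 0 a j -> i = j.
Proof.
case/andP: grace_a => perm_a _ lt_i lt_j E; apply/eqP.
have uniq_a : uniq a by rewrite (perm_uniq perm_a) iota_uniq.
by rewrite -(nth_uniq 0 _ _ uniq_a) ?graceful_size ?E.
Qed.

Lemma graceful_absdiff_inj i j : i < n.-1 -> j < n.-1 ->
  absdiff (nth 0 a i.+1) (nth 0 a i) = absdiff (nth 0 a j.+1) (nth 0 a j) -> i = j.
Proof.
case/andP: grace_a => _ perm_b lt_i lt_j E; apply/eqP.
have uniq_b : uniq (absdiffs a) by rewrite (perm_uniq perm_b) iota_uniq.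
rewrite -(nth_uniq 0 _ _ uniq_b) ?size_absdiffs ?graceful_size //.
by rewrite !nth_absdiffs ?graceful_size ?E.
Qed.

Lemma graceful_rev : graceful n (rev a).
Proof.
by case/andP: grace_a => perm_a perm_b; rewrite /graceful absdiffs_rev !perm_rev perm_a.
Qed.

Lemma graceful_compl : graceful n [seq n.-1 - x | x <- a].
Proof.
case/andP: grace_a => perm_a perm_b.
rewrite /graceful absdiffs_compl ?graceful_all_lt // perm_b andbT.
apply: uniq_perm; rewrite ?iota_uniq //.
  rewrite map_inj_in_uniq ?(perm_uniq perm_a) ?iota_uniq // => x y.
  by rewrite !(perm_mem perm_a) !mem_iota; lia.
move=> x; rewrite mem_iota add0n; apply/mapP/idP => [[y + ->] | lt_x].
  by rewrite (perm_mem perm_a) mem_iota; lia.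
by exists (n.-1 - x); [rewrite (perm_mem perm_a) mem_iota | ]; lia.
Qed.

End Graceful.

Definition fwd_diff m (a : seq nat) i := subm m (nth 0 a i.+1) (nth 0 a i).
Definition bwd_diff m (a : seq nat) i := subm m (nth 0 a i) (nth 0 a i.+1).

Section GracefulDiffs.
Variables (n m : nat) (a : seq nat).
Hypothesis grace_a : graceful n a.
Hypothesis le_nm : 2 * n <= m.+1.

Let lt_a := graceful_lt grace_a.
Let lt_nth i : i < n.-1 -> nth 0 a i < n. Proof. by move=> lt_i; apply: lt_a; lia. Qed.
Let lt_nthS i : i < n.-1 -> nth 0 a i.+1 < n. Proof. by move=> lt_i; apply: lt_a; lia. Qed.

Lemma fwd_diff_inj i j : i < n.-1 -> j < n.-1 -> fwd_diff m a i = fwd_diff m a j -> i = j.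
Proof.
move=> lt_i lt_j E; apply: (graceful_absdiff_inj grace_a) => //.
move: (subm_eq le_nm (lt_nthS lt_i) (lt_nth lt_i) (lt_nthS lt_j) (lt_nth lt_j) E).
by rewrite /absdiff; lia.
Qed.

Lemma bwd_diff_inj i j : i < n.-1 -> j < n.-1 -> bwd_diff m a i = bwd_diff m a j -> i = j.
Proof.
move=> lt_i lt_j E; apply: (graceful_absdiff_inj grace_a) => //.
move: (subm_eq le_nm (lt_nth lt_i) (lt_nthS lt_i) (lt_nth lt_j) (lt_nthS lt_j) E).
by rewrite /absdiff; lia.
Qed.

Lemma fwd_bwd_diff_neq i j : i < n.-1 -> j < n.-1 -> fwd_diff m a i <> bwd_diff m a j.
Proof.
move=> lt_i lt_j E.
move: (subm_eq le_nm (lt_nthS lt_i) (lt_nth lt_i) (lt_nth lt_j) (lt_nthS lt_j) E) => {}E.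
have eq_ij : i = j by apply: (graceful_absdiff_inj grace_a) => //; rewrite /absdiff; lia.
subst j; have /(graceful_nth_inj grace_a) : nth 0 a i.+1 = nth 0 a i by lia.
by lia.
Qed.

Lemma fwd_diff_range i : i < n.-1 -> 0 < fwd_diff m a i < n \/ m - n < fwd_diff m a i < m.
Proof.
move=> lt_i; apply: subm_range (lt_nthS lt_i) (lt_nth lt_i) _; first by lia.
by apply/eqP => /(graceful_nth_inj grace_a); lia.
Qed.

Lemma bwd_diff_range i : i < n.-1 -> 0 < bwd_diff m a i < n \/ m - n < bwd_diff m a i < m.
Proof.
move=> lt_i; apply: subm_range (lt_nth lt_i) (lt_nthS lt_i) _; first by lia.
by apply/eqP => /(graceful_nth_inj grace_a); lia.
Qed.

End GracefulDiffs.

(** * The terraces *)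

Ltac case_ifs := repeat match goal with |- context [if ?b then _ else _] =>
  lazymatch b with context [if _ then _ else _] => fail
  | _ => let E := fresh "E" in case E : b => /= end end.

Ltac pair_lia := first [ exfalso; lia | apply/pair_equal_spec; split; [lia | reflexivity] ].

Section Terrace1.
Variable l : nat.
Hypothesis l_gt0 : 0 < l.
Let m := (4 * l).+1.

Definition middle1 u : nat * bool :=
  if odd u then (if u./2 < l then l - 1 - u./2 else 3 * l - u./2, true)
  else (if u./2 <= l then 3 * l + u./2 else l - 1 + u./2, false).

Definition middle1_quot u : nat :=
  if u < 2 * l then 2 * l - u else if u == 2 * l then 2 * l + 1
  else if u == 2 * l + 1 then 0 else 6 * l + 2 - u.

Lemma middle1_range u : u < 4 * l + 2 ->
  if (middle1 u).2 then (middle1 u).1 <= 2 * l else 2 * l <= (middle1 u).1 < m.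
Proof. by rewrite /middle1 /m; case_ifs; lia. Qed.

Lemma middle1_inj u u' : u < 4 * l + 2 -> u' < 4 * l + 2 -> middle1 u = middle1 u' -> u = u'.
Proof. by move=> lt_u lt_u'; rewrite /middle1; case_ifs; case; lia. Qed.

Lemma middle1_quotE u : u < 4 * l + 1 ->
  quot_code m (middle1 u) (middle1 u.+1) = (middle1_quot u, true).
Proof.
move=> lt_u; rewrite /quot_code /subm /middle1 /middle1_quot /m /=.
by case_ifs; pair_lia.
Qed.

Lemma middle1_quot_inj u u' : u < 4 * l + 1 -> u' < 4 * l + 1 ->
  middle1_quot u = middle1_quot u' -> u = u'.
Proof. by move=> lt_u lt_u'; rewrite /middle1_quot; case_ifs; lia. Qed.

Variable a : seq nat.
Hypothesis grace_a : graceful (2 * l) a.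
Hypothesis a_last : nth 0 a (2 * l).-1 = l.

Definition terrace1 t : nat * bool :=
  if t < 2 * l then (nth 0 a t, false)
  else if t < 6 * l + 2 then middle1 (t - 2 * l)
  else (4 * l - nth 0 a (8 * l + 1 - t), true).

Definition terrace1_quot t : nat * bool :=
  if t < 2 * l - 1 then (fwd_diff m a t, false)
  else if t == 2 * l - 1 then (2 * l, false)
  else if t < 6 * l + 1 then (middle1_quot (t - 2 * l), true)
  else if t == 6 * l + 1 then (2 * l + 1, false)
  else (bwd_diff m a (8 * l - t), false).

Let lt_a := graceful_lt grace_a.
Let inj_a := graceful_nth_inj grace_a.

Variant terrace1_spec t : nat * bool -> Type :=
  | Terrace1Rot of t < 2 * l : terrace1_spec t (nth 0 a t, false)
  | Terrace1Mid of 2 * l <= t < 6 * l + 2 : terrace1_spec t (middle1 (t - 2 * l))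
  | Terrace1Ref of 6 * l + 2 <= t : terrace1_spec t (4 * l - nth 0 a (8 * l + 1 - t), true).

Lemma terrace1P t : terrace1_spec t (terrace1 t).
Proof.
rewrite /terrace1; case: ltnP => [|le1]; first by constructor.
by case: ltnP => [lt2|le2]; constructor; lia.
Qed.

Lemma terrace1_lt t : t < 2 * m -> (terrace1 t).1 < m.
Proof.
move=> lt_t; case: terrace1P => [lt1 | /andP [le1 lt2] | le2] /=; rewrite /m.
- by move: (@lt_a t); lia.
- by move: (@middle1_range (t - 2 * l)); case: (middle1 _) => x [] /=; lia.
- by lia.
Qed.

Lemma terrace1_inj t t' : t < 2 * m -> t' < 2 * m -> terrace1 t = terrace1 t' -> t = t'.
Proof.
move: t t'; apply: inj_below_wlog_le => t t' le_tt' lt_t'.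
case: terrace1P => [lt1 | /andP [le1 lt2] | le2];
  case: terrace1P => [lt1' | /andP [le1' lt2'] | le2'] //; try lia.
- by case=> E; apply: (@inj_a t t') E; lia.
- move: (@middle1_range (t' - 2 * l)); case: (middle1 _) => x [] //= range [E].
  by move: (@lt_a t); lia.
- by move/middle1_inj; lia.
- move: (@middle1_range (t - 2 * l)); case: (middle1 _) => x [] //= range [E].
  by move: (@lt_a (8 * l + 1 - t')); lia.
- case=> E; move: (@inj_a (8 * l + 1 - t) (8 * l + 1 - t')).
  by move: (@lt_a (8 * l + 1 - t)) (@lt_a (8 * l + 1 - t')); lia.
Qed.

Lemma terrace1_quotE t : t < (2 * m).-1 ->
  quot_code m (terrace1 t) (terrace1 t.+1) = terrace1_quot t.
Proof.
move=> lt_t; rewrite /terrace1_quot.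
case: terrace1P => [lt1 | /andP [le1 lt2] | le2];
  case: terrace1P => [lt1' | /andP [le1' lt2'] | le2']; case_ifs; try (exfalso; lia).
- by [].
- have -> : t.+1 - 2 * l = 0 by lia.
  have -> : t = (2 * l).-1 by lia.
  by rewrite a_last /quot_code /subm /=; case_ifs; pair_lia.
- by rewrite subSn // middle1_quotE //; lia.
- have -> : 8 * l + 1 - t.+1 = (2 * l).-1 by lia.
  rewrite a_last (_ : t - 2 * l = 4 * l + 1); last by lia.
  by rewrite /quot_code /subm /middle1 /=; case_ifs; pair_lia.
- rewrite /quot_code /= subm_compl; last 2 first.
  + by move: (@lt_a (8 * l + 1 - t)); lia.
  + by move: (@lt_a (8 * l + 1 - t.+1)); lia.
  by rewrite /bwd_diff; congr (subm _ (nth 0 a _) (nth 0 a _), _); lia.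
Qed.

Lemma terrace1_quot_inj t t' : t < (2 * m).-1 -> t' < (2 * m).-1 ->
  terrace1_quot t = terrace1_quot t' -> t = t'.
Proof.
have le_nm : 2 * (2 * l) <= (4 * l).+1.+1 by lia.
move: t t'; apply: inj_below_wlog_le => t t' le_tt' lt_t'.
(* The 15 cases below pair off the five pieces of [terrace1_quot] in order, with t <= t'. *)
rewrite /terrace1_quot /m; case_ifs; try (exfalso; lia).
all: move=> /pair_equal_spec [eq_q eq_b].
- by apply: (fwd_diff_inj grace_a le_nm _ _ eq_q); lia.
- by move: (fwd_diff_range grace_a le_nm (i := t)); lia.
- by case: eq_b.
- by move: (fwd_diff_range grace_a le_nm (i := t)); lia.
- by exfalso; apply: (fwd_bwd_diff_neq grace_a le_nm _ _ eq_q); lia.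
- by lia.
- by case: eq_b.
- by lia.
- by move: (bwd_diff_range grace_a le_nm (i := 8 * l - t')); lia.
- by move/middle1_quot_inj: eq_q; lia.
- by case: eq_b.
- by case: eq_b.
- by lia.
- by move: (bwd_diff_range grace_a le_nm (i := 8 * l - t')); lia.
- by move/(bwd_diff_inj grace_a le_nm): eq_q; lia.
Qed.

Lemma terrace1_sequencing :
  has_sequencing_from (@dmul m) (dunit m) (du m (nth 0 (absdiffs a) 0)).
Proof.
rewrite nth_absdiffs ?(graceful_size grace_a); last by lia.
have terrace1_rot t : t < 2 * l -> terrace1 t = (nth 0 a t, false) by rewrite /terrace1 => ->.
have m_gt1 : 1 < m by rewrite /m; lia.
have := dihedral_sequencing m_gt1 terrace1_lt terrace1_inj.
rewrite !terrace1_rot; try lia.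
apply=> // t t' lt_t lt_t'; rewrite !terrace1_quotE //; exact: terrace1_quot_inj.
Qed.

End Terrace1.

(* The last block of the terrace for D_{8l+6}, where s and e are the first and last entries of
   the graceful permutation: the junctions before it contribute the quotients u^{3l+1-s} and
   u^{4l+2-2e} v, so its only rotation quotient must be the other one of u^{+-(2l+1)}, namely
   u^{l+2+s}, and it must avoid u^{4l+2-2e} v. *)
Record middle3 (l s e : nat) (mid : nat -> nat * bool) : Prop := Middle3 {
  middle3_start : mid 0 = (l + 1, true);
  middle3_range : forall w, w < 4 * l + 4 ->
    if (mid w).2 then (mid w).1 <= 2 * l + 1 else 2 * l + 1 <= (mid w).1 < 4 * l + 3;
  middle3_inj : forall w w', w < 4 * l + 4 -> w' < 4 * l + 4 -> mid w = mid w' -> w = w';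
  middle3_quot_inj : forall w w', w < 4 * l + 3 -> w' < 4 * l + 3 ->
    quot_code (4 * l).+3 (mid w) (mid w.+1) = quot_code (4 * l).+3 (mid w') (mid w'.+1) ->
    w = w';
  middle3_quot_rot : forall w, w < 4 * l + 3 ->
    (quot_code (4 * l).+3 (mid w) (mid w.+1)).2 = false ->
    (quot_code (4 * l).+3 (mid w) (mid w.+1)).1 = l + 2 + s;
  middle3_quot_ref : forall w, w < 4 * l + 3 ->
    quot_code (4 * l).+3 (mid w) (mid w.+1) <> (4 * l + 2 - 2 * e, true)
}.

Section Terrace3.
Variables (l : nat) (c : seq nat) (mid : nat -> nat * bool).
Hypothesis l_gt0 : 0 < l.
Hypothesis grace_c : graceful (2 * l).+1 c.
Hypothesis c_first : l.-1 <= nth 0 c 0 <= l.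
Hypothesis mid_spec : middle3 l (nth 0 c 0) (nth 0 c (2 * l)) mid.
Let m := (4 * l).+3.

Definition terrace3 t : nat * bool :=
  if t < 2 * l + 1 then (nth 0 c t, false)
  else if t < 4 * l + 2 then (4 * l + 2 - nth 0 c (4 * l + 1 - t), true)
  else mid (t - (4 * l + 2)).

Definition terrace3_quot t : nat * bool :=
  if t < 2 * l then (fwd_diff m c t, false)
  else if t == 2 * l then (4 * l + 2 - 2 * nth 0 c (2 * l), true)
  else if t < 4 * l + 1 then (bwd_diff m c (4 * l - t), false)
  else if t == 4 * l + 1 then (3 * l + 1 - nth 0 c 0, false)
  else quot_code m (mid (t - (4 * l + 2))) (mid (t - (4 * l + 2)).+1).

Let lt_c := graceful_lt grace_c.
Let inj_c := graceful_nth_inj grace_c.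

Variant terrace3_spec t : nat * bool -> Type :=
  | Terrace3Rot of t < 2 * l + 1 : terrace3_spec t (nth 0 c t, false)
  | Terrace3Ref of 2 * l + 1 <= t < 4 * l + 2 :
      terrace3_spec t (4 * l + 2 - nth 0 c (4 * l + 1 - t), true)
  | Terrace3Mid of 4 * l + 2 <= t : terrace3_spec t (mid (t - (4 * l + 2))).

Lemma terrace3P t : terrace3_spec t (terrace3 t).
Proof.
rewrite /terrace3; case: ltnP => [|le1]; first by constructor.
by case: ltnP => [lt2|le2]; constructor; lia.
Qed.

Let mid_range := middle3_range mid_spec.

Lemma terrace3_lt t : t < 2 * m -> (terrace3 t).1 < m.
Proof.
move=> lt_t; case: terrace3P => [lt1 | /andP [le1 lt2] | le2] /=; rewrite /m.
- by move: (@lt_c t); lia.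
- by lia.
- by move: (@mid_range (t - (4 * l + 2))); case: (mid _) => x [] /=; lia.
Qed.

Lemma terrace3_inj t t' : t < 2 * m -> t' < 2 * m -> terrace3 t = terrace3 t' -> t = t'.
Proof.
move: t t'; apply: inj_below_wlog_le => t t' le_tt' lt_t'.
case: terrace3P => [lt1 | /andP [le1 lt2] | le2];
  case: terrace3P => [lt1' | /andP [le1' lt2'] | le2'] //; try lia.
- by case=> E; apply: (@inj_c t t') E; lia.
- move: (@mid_range (t' - (4 * l + 2))); case: (mid _) => x [] //= range [E].
  by move: (@lt_c t); lia.
- case=> E; move: (@inj_c (4 * l + 1 - t) (4 * l + 1 - t')).
  by move: (@lt_c (4 * l + 1 - t)) (@lt_c (4 * l + 1 - t')); lia.
- move: (@mid_range (t' - (4 * l + 2))); case: (mid _) => x [] //= range [E].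
  by move: (@lt_c (4 * l + 1 - t)); lia.
- by move/(middle3_inj mid_spec); lia.
Qed.

Lemma terrace3_quotE t : t < (2 * m).-1 ->
  quot_code m (terrace3 t) (terrace3 t.+1) = terrace3_quot t.
Proof.
move=> lt_t; rewrite /terrace3_quot.
case: terrace3P => [lt1 | /andP [le1 lt2] | le2];
  case: terrace3P => [lt1' | /andP [le1' lt2'] | le2']; case_ifs; try (exfalso; lia).
- by [].
- have -> : 4 * l + 1 - t.+1 = 2 * l by lia.
  have -> : t = 2 * l by lia.
  have lt_e := @lt_c (2 * l) (ltnSn _).
  by rewrite /quot_code /subm /=; case_ifs; pair_lia.
- rewrite /quot_code /= subm_compl; last 2 first.
  + by move: (@lt_c (4 * l + 1 - t)); lia.
  + by move: (@lt_c (4 * l + 1 - t.+1)); lia.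
  by rewrite /bwd_diff; congr (subm _ (nth 0 c _) (nth 0 c _), _); lia.
- have -> : t.+1 - (4 * l + 2) = 0 by lia.
  have -> : 4 * l + 1 - t = 0 by lia.
  by rewrite (middle3_start mid_spec) /quot_code /subm /=; case_ifs; pair_lia.
- by rewrite subSn.
Qed.

Lemma terrace3_quot_inj t t' : t < (2 * m).-1 -> t' < (2 * m).-1 ->
  terrace3_quot t = terrace3_quot t' -> t = t'.
Proof.
have le_nm : 2 * (2 * l).+1 <= (4 * l).+3.+1 by lia.
move: t t'; apply: inj_below_wlog_le => t t' le_tt' lt_t'.
move: (middle3_quot_inj mid_spec (w := t - (4 * l + 2)) (w' := t' - (4 * l + 2))).
move: (middle3_quot_rot mid_spec (w := t' - (4 * l + 2))).
move: (middle3_quot_ref mid_spec (w := t' - (4 * l + 2))).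
rewrite /terrace3_quot /m.
case: (quot_code _ (mid (t - _)) _) => x b; case: (quot_code _ (mid (t' - _)) _) => x' b' /=.
(* The 15 cases below pair off the five pieces of [terrace3_quot] in order, with t <= t'. *)
case_ifs; try (exfalso; lia); rewrite ?pair_equal_spec => ref' rot' inj_q [eq_q eq_b].
- by apply: (fwd_diff_inj grace_c le_nm _ _ eq_q); lia.
- by case: eq_b.
- by exfalso; apply: (fwd_bwd_diff_neq grace_c le_nm _ _ eq_q); lia.
- by move: (fwd_diff_range grace_c le_nm (i := t)); lia.
- by move: (fwd_diff_range grace_c le_nm (i := t)); clear inj_q ref'; lia.
- by lia.
- by case: eq_b.
- by case: eq_b.
- by clear inj_q rot'; lia.
- by move/(bwd_diff_inj grace_c le_nm): eq_q; lia.
- by move: (bwd_diff_range grace_c le_nm (i := 4 * l - t)); lia.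
- by move: (bwd_diff_range grace_c le_nm (i := 4 * l - t)); clear inj_q ref'; lia.
- by lia.
- by clear inj_q ref'; lia.
- suff : t - (4 * l + 2) = t' - (4 * l + 2) by lia.
  by apply: inj_q => //; lia.
Qed.

Lemma terrace3_sequencing :
  has_sequencing_from (@dmul m) (dunit m) (du m (nth 0 (absdiffs c) 0)).
Proof.
rewrite nth_absdiffs ?(graceful_size grace_c); last by lia.
have terrace3_rot t : t < 2 * l + 1 -> terrace3 t = (nth 0 c t, false) by rewrite /terrace3 => ->.
have m_gt1 : 1 < m by rewrite /m; lia.
have := dihedral_sequencing m_gt1 terrace3_lt terrace3_inj.
rewrite !terrace3_rot; try lia.
apply=> // t t' lt_t lt_t'; rewrite !terrace3_quotE //; exact: terrace3_quot_inj.
Qed.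

End Terrace3.

Section Middles.
Variable l : nat.
Hypothesis l_gt0 : 0 < l.

Definition middle3a w : nat * bool :=
  if w == 0 then (l + 1, true)
  else if w < 2 * l + 4 then
    (if odd w then (3 * l + 1 + w./2, false) else (l + 1 - w./2, true))
  else if w == 2 * l + 4 then (2 * l + 1, false)
  else if odd w then (2 * l + 1 - (w - (2 * l + 5))./2, true)
  else (2 * l + 2 + (w - (2 * l + 5))./2, false).

Definition middle3a_quot w : nat * bool :=
  if w < 2 * l + 3 then (2 * l + 3 - w, true)
  else if w == 2 * l + 3 then (2 * l + 2, false)
  else if w == 2 * l + 4 then (0, true)
  else (6 * l + 7 - w, true).

Lemma middle3a_quotE w : w < 4 * l + 3 ->
  quot_code (4 * l).+3 (middle3a w) (middle3a w.+1) = middle3a_quot w.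
Proof. by rewrite /middle3a /middle3a_quot /quot_code /subm => lt_w; case_ifs; pair_lia. Qed.

Lemma middle3a_spec : middle3 l l l.-1 middle3a.
Proof.
split=> [| w lt_w | w w' lt_w lt_w' | w w' lt_w lt_w' | w lt_w | w lt_w] //.
- by rewrite /middle3a; case_ifs; lia.
- by rewrite /middle3a; case_ifs; rewrite ?pair_equal_spec; lia.
- by rewrite !middle3a_quotE // /middle3a_quot; case_ifs; rewrite ?pair_equal_spec; lia.
- by rewrite middle3a_quotE // /middle3a_quot; case_ifs; lia.
- by rewrite middle3a_quotE // /middle3a_quot; case_ifs; rewrite ?pair_equal_spec; lia.
Qed.

Definition middle3b w : nat * bool :=
  if w == 0 then (l + 1, true)
  else if w < 2 * l + 2 then
    (if odd w then (3 * l + 1 - w./2, false) else (l + 1 + w./2, true))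
  else if w == 2 * l + 2 then (4 * l + 2, false)
  else if odd w then ((w - (2 * l + 3))./2, true)
  else (4 * l + 1 - (w - (2 * l + 3))./2, false).

Definition middle3b_quot w : nat * bool :=
  if w < 2 * l then (w + 2 * l + 3, true)
  else if w == 2 * l then (0, true)
  else if w == 2 * l + 1 then (2 * l + 1, false)
  else (w - 2 * l - 1, true).

Lemma middle3b_quotE w : w < 4 * l + 3 ->
  quot_code (4 * l).+3 (middle3b w) (middle3b w.+1) = middle3b_quot w.
Proof. by rewrite /middle3b /middle3b_quot /quot_code /subm => lt_w; case_ifs; pair_lia. Qed.

Lemma middle3b_spec : middle3 l l.-1 l middle3b.
Proof.
split=> [| w lt_w | w w' lt_w lt_w' | w w' lt_w lt_w' | w lt_w | w lt_w] //.
- by rewrite /middle3b; case_ifs; lia.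
- by rewrite /middle3b; case_ifs; rewrite ?pair_equal_spec; lia.
- by rewrite !middle3b_quotE // /middle3b_quot; case_ifs; rewrite ?pair_equal_spec; lia.
- by rewrite middle3b_quotE // /middle3b_quot; case_ifs; lia.
- by rewrite middle3b_quotE // /middle3b_quot; case_ifs; rewrite ?pair_equal_spec; lia.
Qed.

End Middles.

Unset Implicit Arguments.

Theorem lemma4p8 (l : nat) (a c : seq nat) :
  1 <= l ->
  graceful (2 * l) a ->
  graceful (2 * l).+1 c ->
  let b := absdiffs a in
  let d := absdiffs c in
  (* D_{8l+2} : m = 4l+1 ; D_{8l+6} : m = 4l+3 *)
  [/\ nth 0 a (2 * l).-1 = l ->
        has_sequencing_from (@dmul (4 * l).+1) (dunit _) (du _ (nth 0 b 0)),
      nth 0 a 0 = l -> nth 0 a (2 * l).-1 = l.-1 ->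
        has_sequencing_from (@dmul (4 * l).+1) (dunit _) (du _ (nth 0 b 0)) /\
        has_sequencing_from (@dmul (4 * l).+1) (dunit _) (du _ (nth 0 b (2 * l).-2))
    & nth 0 c 0 = l -> nth 0 c (2 * l) = l.-1 ->
        has_sequencing_from (@dmul (4 * l).+3) (dunit _) (du _ (nth 0 d 0)) /\
        has_sequencing_from (@dmul (4 * l).+3) (dunit _) (du _ (nth 0 d (2 * l).-1))].
Proof.
move=> l_gt0 grace_a grace_c b d.
have [size_a size_c] := (graceful_size grace_a, graceful_size grace_c).
split=> [a_last | a_first a_last | c_first c_last].
- exact: (terrace1_sequencing l_gt0 grace_a a_last).
- split.
  + rewrite /b -(absdiffs_compl (graceful_all_lt grace_a)).
    apply: (terrace1_sequencing l_gt0 (graceful_compl grace_a)).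
    by move: a_last; rewrite (nth_map 0) ?size_a; lia.
  + rewrite /b -size_a -nth_absdiffs_rev ?size_a; last by lia.
    apply: (terrace1_sequencing l_gt0 (graceful_rev grace_a)).
    by rewrite nth_rev size_a ?prednK ?subnn //; lia.
- split.
  + rewrite /d; apply: (terrace3_sequencing l_gt0 grace_c); first by lia.
    by rewrite c_first c_last; exact: middle3a_spec.
  + rewrite /d -[(2 * l).-1]/((2 * l).+1.-2) -size_c -nth_absdiffs_rev ?size_c; last by lia.
    apply: (terrace3_sequencing l_gt0 (graceful_rev grace_c)).
      by rewrite nth_rev size_c // subn1 c_last; lia.
    by rewrite !nth_rev size_c // subn1 subnn c_first c_last; exact: middle3b_spec.
Qed.
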